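(* Let $d,a\in\mathbb{N}$ with $d,a\ge 1$, and let $G=(V,E)$ be a $d$-degenerate graph of maximum degree $\Delta=2da$ whose edges have distinct arrival times. Fix an ordering $v_1,\dots,v_n$ of $V$ in which each $v_i$ has at most $d$ neighbors among $v_1,\dots,v_{i-1}$. Run the following process: start with $E_1=\dots=E_a=\emptyset$; for $i=1,\dots,n$, process the front-edges at $v_i$ in increasing order of arrival time; when processing such an edge $e$, let $J(e)=\{j\in\{1,\dots,a\}: |E_j\cap \mathrm{Prev}(e,v_i)|\le 2d-1\}$, let $j'$ be the least index with $|E_{j'}\cap E(v_i)|\le 2d-1$, and add $e$ to $E_{j'}$. Then at every step: (i) such an index $j'$ exists, and adding $e$ to $E_{j'}$ keeps the maximum degree of $(V,E_{j'})$ at most $2d$ (so at the end $E_1,\dots,E_a$ partition $E$ with each $(V,E_j)$ of maximum degree at most $2d$); and (ii) $j'\in J(e)$ and $j'$ is among the $d+1$ smallest elements of $J(e)$, i.e. $|\{j\in J(e): j<j'\}|\le d$.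
   Context: All graphs are simple. For the ordering $v_1,\dots,v_n$, an edge $(v_i,v_k)$ with $i<k$ is a front-edge at $v_i$ and a back-edge at $v_k$. $E(v)$ denotes the set of edges incident to $v$, and $\mathrm{Prev}(e,v)$ denotes the set of edges in $E(v)$ that arrive (strictly) before $e$. A graph is $d$-degenerate if its vertices can be ordered so that each vertex has at most $d$ neighbors earlier in the order. *)

From mathcomp Require Import all_boot.
Set Implicit Arguments. Unset Strict Implicit. Unset Printing Implicit Defensive.

(* A simple graph is a symmetric irreflexive relation [e] on a finite type [T]. The vertex ordering v_1..v_n
   is given by an injective position map [pos : T -> nat] (v_i before v_k iff
   pos v_i < pos v_k). Arrival times are [arr : {set T} -> nat], injective on
   edges. Edge classes E_1..E_a are indexed by 'I_a (E_j is state j, with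
   index j : 'I_a standing for j+1). *)

Section Process.
Variables (T : finType) (e : rel T) (pos : T -> nat) (arr : {set T} -> nat)
          (d a : nat).

Definition isedge (f : {set T}) : bool :=
  [exists u, exists w, e u w && (f == [set u; w])].

Definition Eset : {set {set T}} := [set f | isedge f].

Definition Einc (v : T) : {set {set T}} := [set f | isedge f & v \in f].

Definition Prev (f : {set T}) (v : T) : {set {set T}} :=
  [set g in Einc v | arr g < arr f].

Definition frontedge (v : T) (f : {set T}) : bool :=
  [exists w, e v w && (pos v < pos w) && (f == [set v; w])].

Definition vorder : seq T := sort (fun x y => pos x <= pos y) (enum T).

Definition front (v : T) : seq {set T} :=
  sort (fun f g => arr f <= arr g) (enum [set f | frontedge v f]).

Definition proc : seq (T * {set T}) :=
  flatten [seq [seq (v, f) | f <- front v] | v <- vorder].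

Definition state := {ffun 'I_a -> {set {set T}}}.

Definition S0 : state := [ffun => set0].

Definition admissible (S : state) (v : T) (j : 'I_a) : bool :=
  #|S j :&: Einc v| <= 2 * d - 1.

Definition least_idx (S : state) (v : T) : option 'I_a :=
  [pick j | admissible S v j & [forall k : 'I_a, admissible S v k ==> (j <= k)]].

Definition Jset (S : state) (f : {set T}) (v : T) : {set 'I_a} :=
  [set j : 'I_a | #|S j :&: Prev f v| <= 2 * d - 1].

Definition step (S : state) (p : T * {set T}) : state :=
  match least_idx S p.1 with
  | Some j => [ffun k => if k == j then p.2 |: S k else S k]
  | None => S
  end.

Definition run (s : seq (T * {set T})) : state := foldl step S0 s.

Definition maxdeg_le (F : {set {set T}}) (m : nat) : bool :=
  [forall v : T, #|[set f in F | v \in f]| <= m].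

End Process.

From Pilot Require Import Defs.
From mathcomp Require Import all_boot zify.
Set Implicit Arguments. Unset Strict Implicit. Unset Printing Implicit Defensive.

(** The invariant of the process is that the classes E_j partition the edges
   handled so far and have maximum degree at most 2d.  When the front-edge f = v_i w arrives, every
   handled edge at a later vertex x is a back-edge at x (its front end precedes
   v_i), so x has at most d handled edges; in particular adding f keeps the
   degree of w at most d.  The edges handled at v_i are fewer than its at most
   2da incident edges (f is not handled yet), so by pigeonhole some class has at
   most 2d - 1 of them: j' exists, and adding f raises the degree of v_i in
   E_j' to at most 2d.  Finally, a class E_j with j < j' and j in J(f) has at
   least 2d edges at v_i, but at most 2d - 1 arriving before f; its remaining
   edges at v_i arrived after f, so they are back-edges at v_i, of which there
   are at most d, and the classes are disjoint. *)

Lemma card_bigcup_disjoint (I U : finType) (F : I -> {set U}) :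
  (forall i j, i != j -> [disjoint F i & F j]) -> #|\bigcup_i F i| = \sum_i #|F i|.
Proof.
move=> disjF; rewrite -sum1_card partition_disjoint_bigcup //.
by apply: eq_bigr => i _; rewrite sum1_card.
Qed.

Lemma sum_card_disjoint_le (I U : finType) (P : pred I) (F : I -> {set U}) (B : {set U}) :
  (forall i j, i != j -> [disjoint F i & F j]) -> (forall i, P i -> F i \subset B) ->
  \sum_(i | P i) #|F i| <= #|B|.
Proof.
move=> disjF subFB; pose G i := if P i then F i else set0.
have -> : \sum_(i | P i) #|F i| = \sum_i #|G i|.
  by rewrite big_mkcond; apply: eq_bigr => i _; rewrite /G; case: (P i); rewrite ?cards0.
rewrite -card_bigcup_disjoint => [|i j ij]; last first.
  by rewrite /G; case: (P i); case: (P j); rewrite ?disjF // -setI_eq0 ?set0I ?setI0.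
apply/subset_leq_card/bigcupsP => i _; rewrite /G.
by case: ifP => [/subFB | _]; rewrite ?sub0set.
Qed.

Lemma disjoint_setU1 (U : finType) x (A B : {set U}) :
  [disjoint x |: A & B] = (x \notin B) && [disjoint A & B].
Proof. by rewrite -disjointU1; apply: eq_disjoint => y; rewrite !inE. Qed.

Lemma pairwise_sort_key (X : eqType) (k : X -> nat) (s : seq X) : uniq s ->
  pairwise (fun x y => (k x <= k y) && (x != y)) (sort (fun x y => k x <= k y) s).
Proof.
move=> uniq_s; rewrite (pairwise_relI (fun x y => k x <= k y) (fun x y => x != y)).
rewrite -uniq_pairwise sort_uniq uniq_s andbT -sorted_pairwise.
  by apply: sort_sorted => x y; exact: leq_total.
by move=> y x z; exact: leq_trans.
Qed.

Section Process.
Variables (T : finType) (e : rel T) (pos : T -> nat) (arr : {set T} -> nat) (d a : nat).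

Local Notation proc := (proc e pos arr).
Local Notation state := (state T a).
Local Notation frontedge := (frontedge e pos).
Local Notation Einc := (Einc e).
Local Notation Prev := (Prev e arr).
Local Notation admissible := (admissible e d).
Local Notation least_idx := (least_idx e d).
Local Notation Jset := (Jset e arr d).
Local Notation step := (step e d).

Lemma frontedge_mem v f x : frontedge v f -> x \in f ->
  x = v \/ [/\ e v x, pos v < pos x & f = [set v; x]].
Proof.
case/existsP => w /andP[/andP[e_vw lt_vw] /eqP->].
by rewrite !inE => /orP[/eqP-> | /eqP->]; [left | right].
Qed.

Lemma frontedge_edge v f : frontedge v f -> isedge e f.
Proof.
case/existsP => w /andP[/andP[e_vw _] f_vw].
by apply/existsP; exists v; apply/existsP; exists w; rewrite e_vw.
Qed.

Lemma frontedge_self v f : frontedge v f -> v \in f.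
Proof. by case/existsP => w /andP[_ /eqP->]; rewrite !inE eqxx. Qed.

Lemma frontedge_inc v f : frontedge v f -> f \in Einc v.
Proof. by move=> fr_vf; rewrite inE (frontedge_edge fr_vf) frontedge_self. Qed.

Lemma mem_proc v f : (v, f) \in proc -> frontedge v f.
Proof.
by case/flatten_mapP => u _ /mapP[g]; rewrite mem_sort mem_enum inE => ? [-> ->].
Qed.

Definition precedes (p q : T * {set T}) : bool :=
  (pos p.1 < pos q.1) || [&& p.1 == q.1, arr p.2 <= arr q.2 & p.2 != q.2].

Definition processed (s : seq (T * {set T})) : {set {set T}} :=
  [set g | g \in [seq x.2 | x <- s]].

Lemma processedP s g : reflect (exists u, (u, g) \in s) (g \in processed s).
Proof.
rewrite inE; apply: (iffP mapP) => [[[u h] ug_s /= ->] | [u ug_s]]; first by exists u.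
by exists (u, g).
Qed.

Lemma processed_rcons s x : processed (rcons s x) = x.2 |: processed s.
Proof. by apply/setP => g; rewrite !inE map_rcons mem_rcons in_cons. Qed.

Definition backedges (x : T) : {set {set T}} :=
  [set [set u; x] | u in [set u | e u x & pos u < pos x]].

Lemma Prev_sub f v : Prev f v \subset Einc v.
Proof. by apply/subsetP => g; rewrite inE => /andP[]. Qed.

Lemma least_idx_spec (S : state) v j : least_idx S v = Some j ->
  admissible S v j /\ forall k, admissible S v k -> j <= k.
Proof.
rewrite /Defs.least_idx; case: pickP => [i /andP[adm_i /forallP min_i] [<-] | _] //.
by split=> // k; exact: implyP (min_i k).
Qed.

Lemma least_idx_exists (S : state) v : (exists j, admissible S v j) ->
  exists j, least_idx S v = Some j.
Proof.
case=> j0 adm_j0; rewrite /Defs.least_idx; case: pickP => [j _ | none]; first by exists j.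
have [j adm_j min_j] := arg_minnP (fun j : 'I_a => j : nat) adm_j0.
move: (none j); rewrite adm_j /= => /negbT/forallPn[k].
by rewrite negb_imply => /andP[/min_j ->].
Qed.

Lemma step_least (S : state) v f j k : least_idx S v = Some j ->
  step S (v, f) k = if k == j then f |: S k else S k.
Proof. by move=> least; rewrite /step /= least ffunE. Qed.

Record invariant (S : state) (s : seq (T * {set T})) : Prop := Invariant {
  inv_cover : \bigcup_(j : 'I_a) S j = processed s;
  inv_disjoint : forall i j : 'I_a, i != j -> [disjoint S i & S j];
  inv_maxdeg : forall j, maxdeg_le (S j) (2 * d) }.

Lemma inv_sub S s j : invariant S s -> S j \subset processed s.
Proof. by case=> <- _ _; exact: bigcup_sup. Qed.

Hypotheses (e_sym : symmetric e) (e_irr : irreflexive e).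
Hypotheses (pos_inj : injective pos) (arr_inj : {in Eset e &, injective arr}).
Hypotheses (d_gt0 : 0 < d) (deg_le : forall v, #|[set u | e v u]| <= 2 * d * a).
Hypothesis few_back : forall x, #|[set u | e u x & pos u < pos x]| <= d.

(* [2 * d - 1] is truncated subtraction: these rewritings are where [0 < d] is needed. *)
Lemma admissible_lt_card (S : state) v j :
  admissible S v j = (#|S j :&: Einc v| < 2 * d).
Proof. by rewrite /admissible subn1 -ltnS prednK ?muln_gt0. Qed.

Lemma Jset_lt_card (S : state) f v j :
  (j \in Jset S f v) = (#|S j :&: Prev f v| < 2 * d).
Proof. by rewrite inE subn1 -ltnS prednK ?muln_gt0. Qed.

Lemma pairwise_precedes_proc : pairwise precedes proc.
Proof.
have : pairwise (fun x y => (pos x <= pos y) && (x != y)) (vorder pos).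
  exact/pairwise_sort_key/enum_uniq.
rewrite /Defs.proc; elim: (vorder pos) => //= v s IH /andP[v_s /IH {}IH].
rewrite pairwise_cat IH andbT; apply/andP; split.
- apply/allrelP => _ _ /mapP[f _ ->] /flatten_mapP[u u_s /mapP[g _ ->]].
  have /andP[le_vu ne_vu] := allP v_s u u_s.
  by rewrite /precedes /= ltn_neqAle le_vu (inj_eq pos_inj) ne_vu.
- rewrite pairwise_map; apply: sub_pairwise (pairwise_sort_key arr (enum_uniq _)).
  by move=> f g /andP[le_fg ne_fg]; rewrite /relpre /precedes /= ltnn eqxx le_fg ne_fg.
Qed.

Lemma card_Einc v : #|Einc v| <= 2 * d * a.
Proof.
apply: leq_trans (deg_le v); apply: leq_trans (leq_imset_card (fun u => [set v; u]) _).
apply/subset_leq_card/subsetP => g; rewrite inE.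
case/andP => /existsP[x /existsP[y /andP[e_xy /eqP->]]].
rewrite !inE => /orP[/eqP-> | /eqP->]; apply/imsetP.
  by exists y; rewrite ?inE.
by exists x; rewrite ?inE 1?e_sym // setUC.
Qed.

Lemma card_backedges x : #|backedges x| <= d.
Proof. exact: leq_trans (leq_imset_card _ _) (few_back x). Qed.

Section Step.
Variables (s1 s2 : seq (T * {set T})) (v : T) (f : {set T}) (S : state).
Hypotheses (proc_split : proc = s1 ++ (v, f) :: s2) (S_inv : invariant S s1).

Lemma frontedge_current : frontedge v f.
Proof. by apply: mem_proc; rewrite proc_split mem_cat mem_head orbT. Qed.

Lemma processed_before u g : (u, g) \in s1 -> frontedge u g /\ precedes (u, g) (v, f).
Proof.
move=> ug_s1; split; first by apply: mem_proc; rewrite proc_split mem_cat ug_s1.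
move: pairwise_precedes_proc; rewrite proc_split pairwise_cat => /and3P[/allrelP prec _ _].
by apply: prec; rewrite ?mem_head.
Qed.

Lemma processed_edge g : g \in processed s1 -> g \in Eset e.
Proof. by case/processedP => u /processed_before[/frontedge_edge g_edge _]; rewrite inE. Qed.

Lemma current_unprocessed : f \notin processed s1.
Proof.
apply/processedP => -[u /processed_before[fr_uf]].
rewrite /precedes /= eqxx !andbF orbF => lt_uv.
case: (frontedge_mem frontedge_current (frontedge_self fr_uf)) => [uv | [_ lt_vu _]].
  by rewrite uv ltnn in lt_uv.
by have := ltn_trans lt_uv lt_vu; rewrite ltnn.
Qed.

Lemma processed_later x g : pos v < pos x -> g \in processed s1 -> x \in g ->
  g \in backedges x.
Proof.
move=> lt_vx /processedP[u /processed_before[fr_ug prec]] xg.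
have le_uv : pos u <= pos v by case/orP: prec => [/ltnW | /and3P[/eqP/= -> _ _]].
case: (frontedge_mem fr_ug xg) => [xu | [e_ux lt_ux ->]].
  by have := leq_ltn_trans le_uv lt_vx; rewrite xu ltnn.
by apply/imsetP; exists u; rewrite // inE e_ux.
Qed.

Lemma processed_late_arrival g : g \in processed s1 -> v \in g -> arr f <= arr g ->
  g \in backedges v.
Proof.
move=> g_done vg ge_arr; have g_edge := processed_edge g_done.
case/processedP: g_done => u /processed_before[fr_ug].
case: (frontedge_mem fr_ug vg) => [vu | [e_uv lt_uv ->] _]; last first.
  by apply/imsetP; exists u; rewrite // inE e_uv.
rewrite /precedes /= -vu ltnn eqxx /= => /andP[le_arr ne_gf].
have f_edge : f \in Eset e by rewrite inE (frontedge_edge frontedge_current).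
have eq_arr : arr g = arr f by apply/eqP; rewrite eqn_leq le_arr ge_arr.
by rewrite (arr_inj g_edge f_edge eq_arr) eqxx in ne_gf.
Qed.

Lemma admissible_exists : exists j, admissible S v j.
Proof.
case: (pickP (admissible S v)) => [j adm_j | none]; first by exists j.
have sum_lt : \sum_(j < a) #|S j :&: Einc v| < #|Einc v|.
  apply: (@leq_ltn_trans #|processed s1 :&: Einc v|).
    apply: sum_card_disjoint_le => [i j ij | j _].
      exact: disjointW (subsetIl _ _) (subsetIl _ _) (inv_disjoint S_inv ij).
    exact/setSI/inv_sub.
  apply/proper_card/properP; split; first exact: subsetIr.
  exists f; first exact/frontedge_inc/frontedge_current.
  by rewrite inE (negbTE current_unprocessed).
have : a * (2 * d) <= \sum_(j < a) #|S j :&: Einc v|.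
  rewrite -[a in a * _]card_ord -sum_nat_const; apply: leq_sum => j _.
  by move: (none j); rewrite admissible_lt_card => /negbT; rewrite -leqNgt.
have := card_Einc v.
lia.
Qed.

Variable j' : 'I_a.
Hypothesis least : least_idx S v = Some j'.

Lemma maxdeg_add_current : maxdeg_le (f |: S j') (2 * d).
Proof.
have [adm_j' _] := least_idx_spec least; rewrite admissible_lt_card in adm_j'.
have fr_vf := frontedge_current.
apply/forallP => x; case: (eqVneq x v) => [-> | xv].
  apply: (@leq_trans #|f |: (S j' :&: Einc v)|).
    apply/subset_leq_card/subsetP => g; rewrite !inE.
    case/andP=> /orP[-> // | gS] vg; apply/orP; right.
    have := processed_edge (subsetP (inv_sub _ S_inv) _ gS).
    by rewrite inE gS vg => ->.
  by rewrite cardsU1 (leq_trans _ adm_j') // -add1n leq_add2r leq_b1.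
case xf: (x \in f).
  have [xv' | [e_vx lt_vx f_vx]] := frontedge_mem fr_vf xf; first by rewrite xv' eqxx in xv.
  apply: leq_trans (leq_trans (card_backedges x) (leq_pmull _ _)) => //.
  apply/subset_leq_card/subsetP => g; rewrite !inE => /andP[/orP[/eqP-> | gS] xg].
    by rewrite f_vx; apply/imsetP; exists v; rewrite // inE e_vx.
  exact: processed_later lt_vx (subsetP (inv_sub _ S_inv) _ gS) xg.
apply: leq_trans (forallP (inv_maxdeg S_inv j') x).
apply/subset_leq_card/subsetP => g; rewrite !inE => /andP[/orP[/eqP gf | gS] xg].
  by rewrite -gf xg in xf.
by rewrite gS.
Qed.

Lemma least_in_Jset : j' \in Jset S f v.
Proof.
have [adm_j' _] := least_idx_spec least.
rewrite Jset_lt_card; rewrite admissible_lt_card in adm_j'.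
exact/(leq_ltn_trans _ adm_j')/subset_leq_card/setIS/Prev_sub.
Qed.

Lemma card_Jset_below : #|[set j in Jset S f v | j < j']| <= d.
Proof.
have [_ min_j'] := least_idx_spec least.
pose late j := (S j :&: Einc v) :\: Prev f v.
apply: leq_trans (card_backedges v); rewrite -sum1_card.
apply: (@leq_trans (\sum_(j in [set j in Jset S f v | j < j']) #|late j|)).
  apply: leq_sum => j; rewrite inE => /andP[jJ lt_jj'].
  have : ~~ admissible S v j by apply: contraTN lt_jj' => /min_j'; rewrite leqNgt.
  rewrite admissible_lt_card -leqNgt -(cardsID (Prev f v)); rewrite Jset_lt_card in jJ.
  have : #|S j :&: Einc v :&: Prev f v| <= #|S j :&: Prev f v|.
    exact/subset_leq_card/setSI/subsetIl.
  rewrite /late; lia.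
have late_sub j : late j \subset S j by exact: subset_trans (subsetDl _ _) (subsetIl _ _).
apply: sum_card_disjoint_le => [i k ik | j _].
  exact: disjointW (late_sub i) (late_sub k) (inv_disjoint S_inv ik).
apply/subsetP => g /setDP[/setIP[gS g_inc] g_prev].
apply: (processed_late_arrival (subsetP (inv_sub _ S_inv) _ gS)).
  by move: g_inc; rewrite inE => /andP[].
by move: g_prev; rewrite inE g_inc /= -leqNgt.
Qed.

Lemma inv_step : invariant (step S (v, f)) (rcons s1 (v, f)).
Proof.
have [cover disj deg] := S_inv.
have f_notin k : f \notin S k.
  exact: contra (subsetP (inv_sub _ S_inv) f) current_unprocessed.
split=> [|i k ik | k].
- rewrite processed_rcons -cover (bigD1 j') //= [in RHS](bigD1 j') //=.
  rewrite (step_least _ _ least) eqxx -setUA; congr (_ :|: (_ :|: _)).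
  by apply: eq_bigr => k /negbTE kj; rewrite (step_least _ _ least) kj.
- rewrite !(step_least _ _ least); case: eqP => [ij | _]; case: eqP => [kj | _].
  + by rewrite ij kj eqxx in ik.
  + by rewrite disjoint_setU1 f_notin disj.
  + by rewrite disjoint_sym disjoint_setU1 f_notin disjoint_sym disj.
  + exact: disj.
- rewrite (step_least _ _ least); case: eqP => [-> | _]; last exact: deg.
  exact: maxdeg_add_current.
Qed.

End Step.

Lemma inv_run s1 s2 : proc = s1 ++ s2 -> invariant (run e d a s1) s1.
Proof.
elim/last_ind: s1 s2 => [|s [v f] IH] s2 proc_split.
  split=> [|i j _ | j]; rewrite /run /= ?ffunE.
  - by rewrite big1 => [|j _]; [apply/setP => g; rewrite !inE | rewrite ffunE].
  - by rewrite -setI_eq0 set0I.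
  - by apply/forallP => x; rewrite eq_card0 // => g; rewrite !inE.
rewrite cat_rcons in proc_split; have S_inv := IH _ proc_split.
have [j' least] := least_idx_exists (admissible_exists proc_split S_inv).
by rewrite /run foldl_rcons; exact: (inv_step proc_split S_inv least).
Qed.

Lemma processed_proc : processed proc = Eset e.
Proof.
apply/setP => g; apply/idP/idP.
  by case/processedP => v /mem_proc/frontedge_edge; rewrite inE.
rewrite inE => /existsP[x /existsP[y /andP[e_xy /eqP g_xy]]].
have front_done u w : e u w -> pos u < pos w -> g = [set u; w] -> g \in processed proc.
  move=> e_uw lt_uw g_uw; apply/processedP; exists u; apply/flatten_mapP.
  exists u; first by rewrite mem_sort mem_enum.
  apply/map_f; rewrite mem_sort mem_enum inE; apply/existsP; exists w.
  by rewrite e_uw lt_uw g_uw eqxx.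
have : pos x != pos y by rewrite (inj_eq pos_inj); apply: contraTneq e_xy => ->; rewrite e_irr.
rewrite neq_ltn => /orP[lt_xy | lt_yx]; first exact: front_done e_xy lt_xy g_xy.
by apply: front_done lt_yx _; rewrite 1?e_sym // g_xy setUC.
Qed.

End Process.

Theorem lemma1 (T : finType) (e : rel T) (pos : T -> nat) (arr : {set T} -> nat)
    (d a : nat) :
  1 <= d -> 1 <= a ->
  symmetric e -> irreflexive e ->
  \max_(v : T) #|[set u | e v u]| = 2 * d * a ->
  injective pos ->
  (forall v : T, #|[set u | e u v & pos u < pos v]| <= d) ->
  {in Eset e &, injective arr} ->
  (forall (s1 s2 : seq (T * {set T})) (v : T) (f : {set T}),
     proc e pos arr = s1 ++ (v, f) :: s2 ->
     let S := run e d a s1 in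
     (exists j : 'I_a, admissible e d S v j) /\
     (forall j' : 'I_a, least_idx e d S v = Some j' ->
        maxdeg_le (step e d S (v, f) j') (2 * d) /\
        j' \in Jset e arr d S f v /\
        #|[set j in Jset e arr d S f v | j < j']| <= d)) /\
  (let F := run e d a (proc e pos arr) in
   \bigcup_(j : 'I_a) F j = Eset e /\
   (forall i j : 'I_a, i != j -> [disjoint F i & F j]) /\
   (forall j : 'I_a, maxdeg_le (F j) (2 * d))).
Proof.
move=> d_gt0 _ e_sym e_irr max_deg pos_inj few_back arr_inj.
have deg_le v : #|[set u | e v u]| <= 2 * d * a by rewrite -max_deg leq_bigmax.
have run_inv := inv_run (arr := arr) e_sym pos_inj d_gt0 deg_le few_back.
split=> [s1 s2 v f proc_split S | F].
  have S_inv : invariant d S s1 := run_inv _ _ proc_split.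
  split=> [|j' least].
    exact: (admissible_exists e_sym pos_inj d_gt0 deg_le proc_split S_inv).
  rewrite (step_least _ _ least) eqxx; split.
    exact: (maxdeg_add_current pos_inj d_gt0 few_back proc_split S_inv least).
  split; first exact: (least_in_Jset arr d_gt0 f least).
  exact: (card_Jset_below pos_inj arr_inj d_gt0 few_back proc_split S_inv least).
have [cover disj maxdeg] : invariant d F (proc e pos arr).
  by apply: (run_inv _ [::]); rewrite cats0.
by split=> //; rewrite cover (processed_proc arr e_sym e_irr pos_inj).
Qed.
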